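(* For every 3-periodic of the elliptic billiard, the interior angles $\theta_i'$ of its outer triangle satisfy $$\sum_{i=1}^3\cos(2\theta_i')=\frac{(a^2+b^2)(a^2+b^2-2\delta)}{c^4}=3-JL,\qquad \delta=\sqrt{a^4-a^2b^2+b^4}.$$
   Context: The elliptic billiard is $\mathcal{E}: x^2/a^2+y^2/b^2=1$, $a>b>0$, $c=\sqrt{a^2-b^2}$. A 3-periodic is a triangle $P_1P_2P_3$ inscribed in $\mathcal{E}$ that is a closed billiard trajectory (at each vertex the normal to $\mathcal{E}$ bisects the angle between the two incident sides). Its outer triangle has as sides the tangent lines to $\mathcal{E}$ at $P_1,P_2,P_3$. $L$ is the perimeter (the same for all 3-periodics), $J$ is Joachimsthal's constant $J=\frac12\nabla f(P_i)\cdot\hat v>0$ ($f=x^2/a^2+y^2/b^2$, $\hat v$ unit direction of the trajectory at $P_i$); explicitly $J=\sqrt{2\delta-a^2-b^2}/c^2$ and $L=2(\delta+a^2+b^2)J$. *)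

From Stdlib Require Import Reals.
Open Scope R_scope.

Definition pt := (R * R)%type.

Definition dot (u v : pt) : R := fst u * fst v + snd u * snd v.
Definition vsub (u v : pt) : pt := (fst u - fst v, snd u - snd v).
Definition vadd (u v : pt) : pt := (fst u + fst v, snd u + snd v).
Definition vscale (k : R) (u : pt) : pt := (k * fst u, k * snd u).
Definition norm (u : pt) : R := sqrt (dot u u).
Definition dist (P Q : pt) : R := norm (vsub P Q).
Definition udir (P Q : pt) : pt := vscale (/ dist Q P) (vsub Q P).

Definition ell_f (a b : R) (P : pt) : R := fst P ^ 2 / a ^ 2 + snd P ^ 2 / b ^ 2.
Definition ell_grad (a b : R) (P : pt) : pt := (2 * fst P / a ^ 2, 2 * snd P / b ^ 2).
Definition on_ellipse (a b : R) (P : pt) : Prop := ell_f a b P = 1.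

Definition ell_tangent (a b : R) (P : pt) : pt := (- snd P / b ^ 2, fst P / a ^ 2).

(* Reflection law at vertex P with neighbours Pm, Pp: the normal to the
   ellipse at P bisects the angle between the sides P Pm and P Pp, i.e. the sum
   of the two unit side vectors is normal to the ellipse (orthogonal to the tangent). *)
Definition billiard_reflection (a b : R) (Pm P Pp : pt) : Prop :=
  dot (vadd (udir P Pm) (udir P Pp)) (ell_tangent a b P) = 0.

Definition three_periodic (a b : R) (P1 P2 P3 : pt) : Prop :=
  on_ellipse a b P1 /\ on_ellipse a b P2 /\ on_ellipse a b P3 /\
  P1 <> P2 /\ P2 <> P3 /\ P3 <> P1 /\
  billiard_reflection a b P3 P1 P2 /\
  billiard_reflection a b P1 P2 P3 /\
  billiard_reflection a b P2 P3 P1.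

Definition on_tangent_line (a b : R) (P Q : pt) : Prop :=
  fst P * fst Q / a ^ 2 + snd P * snd Q / b ^ 2 = 1.

Definition interior_angle (A B C : pt) : R :=
  acos (dot (vsub B A) (vsub C A) / (norm (vsub B A) * norm (vsub C A))).

Definition perimeter (P1 P2 P3 : pt) : R := dist P1 P2 + dist P2 P3 + dist P3 P1.

(* Joachimsthal's constant J = 1/2 grad f(P1) . v, v the unit direction of the
   trajectory at P1 (arriving from P3, travelling P3 -> P1 -> P2). *)
Definition joachimsthal (a b : R) (P1 P2 P3 : pt) : R :=
  / 2 * dot (ell_grad a b P1) (udir P3 P1).

From Pilot Require Import Defs.
From Stdlib Require Import Reals Lra Psatz.
Open Scope R_scope.

(** Write the ellipse as the central conic [ea x^2 + eb y^2 = 1] (ea = 1/a^2,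
    eb = 1/b^2) with half-gradient [n(P) = (ea x, eb y)].  For a 3-periodic
    P1 P2 P3 the normal at Pi bisects the angle of the orbit at Pi, so the
    tangents are the external bisectors and the outer triangle Q1 Q2 Q3 is the
    excentral triangle of the orbit.  From this:
    - Qi = Pi + k n(Pi) with a common k, and L = 2 k c, where
      c = n(P1).u12 < 0 is Joachimsthal's invariant (so J = -c);
    - the angle of the outer triangle at Qi satisfies cos(2 th_i') = -cos th_i,
      and the reflection law gives cos th_i = 2 c^2 / |n(Pi)|^2 - 1;
    - writing that Qi lies on the tangents at Pj, Pk and inverting a 3x3 Gram
      system yields sum 1/|n(Pi)|^2 = -k and k^2 ea eb + 2k(ea+eb) + 3 = 0,
      while the chord P1P2 gives c^2 (k(ea+eb)+2) = k ea eb.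
    Hence sum cos(2 th_i') = 3 + 2 k c^2 = 3 - J L, and solving the quadratic
    for k (the root compatible with |n|^2 <= eb) gives the closed form. *)

(** ** Plane vector algebra *)

Definition cross (u v : pt) : R := fst u * snd v - snd u * fst v.

Definition sqn (u : pt) : R := dot u u.

Definition perp (u : pt) : pt := (- snd u, fst u).

Ltac coords := unfold perp, sqn, cross, dot, vadd, vsub, vscale in *; simpl in *.

Ltac pt_ring := apply injective_projections; coords; ring.

Lemma sqn_nonneg u : 0 <= sqn u.
Proof. destruct u as [x y]; unfold sqn, dot; simpl; nra. Qed.

Lemma sqn_zero u : sqn u = 0 -> u = (0, 0).
Proof.
  destruct u as [x y]; unfold sqn, dot; simpl; intro H.
  pose proof (Rle_0_sqr x); pose proof (Rle_0_sqr y); unfold Rsqr in *.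
  assert (Hx : x * x = 0) by lra; assert (Hy : y * y = 0) by lra.
  apply Rmult_integral in Hx as [-> | ->]; apply Rmult_integral in Hy as [-> | ->]; reflexivity.
Qed.

Lemma sqn_pos u : u <> (0, 0) -> 0 < sqn u.
Proof.
  intro Hu; destruct (Req_dec (sqn u) 0) as [H|H].
  - exfalso; apply Hu, sqn_zero, H.
  - pose proof (sqn_nonneg u); lra.
Qed.

Lemma dot_sym u v : dot u v = dot v u.
Proof. coords; ring. Qed.

Lemma vadd_comm u v : vadd u v = vadd v u.
Proof. pt_ring. Qed.

Lemma dot_vsub_r z a b : dot z (vsub a b) = dot z a - dot z b.
Proof. coords; ring. Qed.

Lemma vadd_vsub P Q : vadd P (vsub Q P) = Q.
Proof. pt_ring. Qed.

Lemma vsub_eq0 P Q : vsub Q P = (0, 0) -> Q = P.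
Proof. intro E; rewrite <- (vadd_vsub P Q), E; pt_ring. Qed.

Lemma lagrange u v : dot u v ^ 2 + cross u v ^ 2 = sqn u * sqn v.
Proof. coords; ring. Qed.

Lemma orth_decomp z X : sqn z <> 0 -> dot X z = 0 ->
  X = vscale (cross z X / sqn z) (perp z).
Proof.
  destruct z as [z1 z2], X as [x1 x2]; coords; intros Hz HX.
  assert (E1 : z1 * (x1 * z1 + x2 * z2) = 0) by (rewrite HX; ring).
  assert (E2 : z2 * (x1 * z1 + x2 * z2) = 0) by (rewrite HX; ring).
  f_equal; field_simplify_eq; auto; lra.
Qed.

Lemma parallel_decomp z X : sqn z <> 0 -> cross X z = 0 ->
  X = vscale (dot X z / sqn z) z.
Proof.
  destruct z as [z1 z2], X as [x1 x2]; coords; intros Hz HX.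
  assert (E1 : z1 * (x1 * z2 - x2 * z1) = 0) by (rewrite HX; ring).
  assert (E2 : z2 * (x1 * z2 - x2 * z1) = 0) by (rewrite HX; ring).
  f_equal; field_simplify_eq; auto; lra.
Qed.

Lemma dot_cross_expand a b z :
  dot a b * sqn z = dot a z * dot b z + cross a z * cross b z.
Proof. coords; ring. Qed.

Lemma cross_expand a b z :
  cross a b * sqn z = dot a z * cross z b + cross a z * dot b z.
Proof. coords; ring. Qed.

Lemma perp_perp a b z : sqn z <> 0 -> dot a z = 0 -> dot b z = 0 -> cross a b = 0.
Proof.
  intros Hz Ha Hb; apply (Rmult_eq_reg_r (sqn z)); auto.
  rewrite cross_expand, Ha, Hb; ring.
Qed.

Lemma par_perp a b z : sqn z <> 0 -> cross a z = 0 -> dot b z = 0 -> dot a b = 0.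
Proof.
  intros Hz Ha Hb; apply (Rmult_eq_reg_r (sqn z)); auto.
  rewrite dot_cross_expand, Ha, Hb; ring.
Qed.

Lemma par_par a b z : sqn z <> 0 -> cross a z = 0 -> cross b z = 0 -> cross a b = 0.
Proof.
  intros Hz Ha Hb; apply (Rmult_eq_reg_r (sqn z)); auto.
  rewrite cross_expand, Ha.
  replace (cross z b) with (- cross b z) by (coords; ring).
  rewrite Hb; ring.
Qed.

Lemma perp_lines_angle X Y z1 z2 : sqn z1 <> 0 -> sqn z2 <> 0 ->
  dot X z1 = 0 -> dot Y z2 = 0 ->
  dot X Y ^ 2 * (sqn z1 * sqn z2) = dot z1 z2 ^ 2 * (sqn X * sqn Y).
Proof.
  intros H1 H2 HX HY.
  rewrite (orth_decomp z1 X H1 HX), (orth_decomp z2 Y H2 HY).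
  generalize (cross z1 X / sqn z1), (cross z2 Y / sqn z2); intros l m.
  coords; ring.
Qed.

(** ** Unit vectors, bisectors and the excentral triangle *)

(** Three unit vectors of the plane have a singular Gram matrix. *)
Lemma gram_unit3 u v w : sqn u = 1 -> sqn v = 1 -> sqn w = 1 ->
  1 + 2 * dot u w * dot w v * dot u v
    - dot u w ^ 2 - dot w v ^ 2 - dot u v ^ 2 = 0.
Proof.
  intros Hu Hv Hw.
  assert (G : sqn u * sqn w * sqn v + 2 * dot u w * dot w v * dot u v
              - sqn u * dot w v ^ 2 - sqn w * dot u v ^ 2 - sqn v * dot u w ^ 2 = 0)
    by (coords; ring).
  rewrite Hu, Hv, Hw in G; lra.
Qed.

(** For a triangle whose sides have unit directions u (P->Pj), v (P->Pk) and
    w (Pj->Pk), the internal bisectors at Pj and Pk are along w-u and v+w; the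
    squared cosine of their angle is (1 - u.v)/2. *)
Lemma bisector_normals_angle u v w : sqn u = 1 -> sqn v = 1 -> sqn w = 1 ->
  2 * dot (vsub w u) (vadd v w) ^ 2
    = (1 - dot u v) * (sqn (vsub w u) * sqn (vadd v w)).
Proof.
  intros Hu Hv Hw.
  pose proof (gram_unit3 u v w Hu Hv Hw) as G.
  assert (D : dot (vsub w u) (vadd v w) = dot w v + sqn w - dot u v - dot u w)
    by (coords; ring).
  assert (S1 : sqn (vsub w u) = sqn w + sqn u - 2 * dot u w) by (coords; ring).
  assert (S2 : sqn (vadd v w) = sqn v + sqn w + 2 * dot w v) by (coords; ring).
  rewrite D, S1, S2, Hu, Hv, Hw.
  lra.
Qed.

(** Hence the lines orthogonal to these bisectors (the external bisectors, i.e.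
    the sides of the excentral triangle through Pj and Pk) meet at an angle
    whose squared cosine is (1 - cos P)/2. *)
Lemma excentral_angle u v w X Y : sqn u = 1 -> sqn v = 1 -> sqn w = 1 ->
  sqn (vsub w u) <> 0 -> sqn (vadd v w) <> 0 ->
  dot X (vsub w u) = 0 -> dot Y (vadd v w) = 0 ->
  2 * dot X Y ^ 2 = (1 - dot u v) * (sqn X * sqn Y).
Proof.
  intros Hu Hv Hw H1 H2 HX HY.
  pose proof (perp_lines_angle X Y _ _ H1 H2 HX HY) as A.
  pose proof (bisector_normals_angle u v w Hu Hv Hw) as B.
  apply (Rmult_eq_reg_r (sqn (vsub w u) * sqn (vadd v w))).
  - replace (2 * dot X Y ^ 2 * (sqn (vsub w u) * sqn (vadd v w)))
      with (2 * (dot X Y ^ 2 * (sqn (vsub w u) * sqn (vadd v w)))) by ring.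
    rewrite A.
    replace (2 * (dot (vsub w u) (vadd v w) ^ 2 * (sqn X * sqn Y)))
      with (2 * dot (vsub w u) (vadd v w) ^ 2 * (sqn X * sqn Y)) by ring.
    rewrite B; ring.
  - apply Rmult_integral_contrapositive_currified; auto.
Qed.

(** A point W (relative to P) on the external bisectors at Pj and Pk lies on
    the internal bisector at P, and its projection on u+v is the perimeter. *)
Lemma excenter_projection u v w W dj dk djk :
  sqn u = 1 -> sqn v = 1 -> sqn w = 1 ->
  sqn (vsub w u) <> 0 -> sqn (vadd v w) <> 0 ->
  vscale dk v = vadd (vscale dj u) (vscale djk w) ->
  dot (vsub W (vscale dj u)) (vsub w u) = 0 ->
  dot (vsub W (vscale dk v)) (vadd v w) = 0 ->
  cross W (vadd u v) = 0 /\ dot W (vadd u v) = dj + dk + djk.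
Proof.
  intros Hu Hv Hw H1 H2 Hclose Hj Hk.
  assert (Cj : cross (vsub W (vscale dj u)) (vadd u w) = 0).
  { apply (perp_perp _ _ (vsub w u)); auto.
    replace (dot (vadd u w) (vsub w u)) with (sqn w - sqn u) by (coords; ring).
    rewrite Hu, Hw; ring. }
  assert (Ck : cross (vsub W (vscale dk v)) (vsub w v) = 0).
  { apply (perp_perp _ _ (vadd v w)); auto.
    replace (dot (vsub w v) (vadd v w)) with (sqn w - sqn v) by (coords; ring).
    rewrite Hv, Hw; ring. }
  split.
  - replace (cross W (vadd u v)) with
      (cross (vsub W (vscale dj u)) (vadd u w) - cross (vsub W (vscale dk v)) (vsub w v)
       + cross (vsub (vscale dj u) (vscale dk v)) w) by (coords; ring).
    rewrite Cj, Ck, Hclose; coords; ring.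
  - replace (dot W (vadd u v)) with
      (- dot (vsub W (vscale dj u)) (vsub w u) + dot (vsub W (vscale dk v)) (vadd v w)
       + dot (vsub (vscale dk v) (vscale dj u)) w + dj * sqn u + dk * sqn v)
      by (coords; ring).
    rewrite Hj, Hk, Hclose.
    replace (dot (vsub (vadd (vscale dj u) (vscale djk w)) (vscale dj u)) w)
      with (djk * sqn w) by (coords; ring).
    rewrite Hu, Hv, Hw; ring.
Qed.

Lemma triangle_bisectors_nonzero u v w dj dk djk :
  0 < dj -> 0 < dk -> 0 < djk -> cross u v <> 0 ->
  vscale dk v = vadd (vscale dj u) (vscale djk w) ->
  sqn (vadd u v) <> 0 /\ sqn (vsub w u) <> 0 /\ sqn (vadd v w) <> 0.
Proof.
  intros Hj Hk Hjk Huv Hclose; repeat split; intro H; apply sqn_zero in H; apply Huv.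
  - replace (cross u v) with (cross u (vadd u v)) by (coords; ring).
    rewrite H; coords; ring.
  - apply (Rmult_eq_reg_l dk); [|lra].
    replace (dk * cross u v) with (cross u (vscale dk v)) by (coords; ring).
    rewrite Hclose.
    replace (cross u (vadd (vscale dj u) (vscale djk w)))
      with (djk * cross u (vsub w u)) by (coords; ring).
    rewrite H; coords; ring.
  - apply (Rmult_eq_reg_l dj); [|lra].
    replace (dj * cross u v)
      with (cross (vadd (vscale dj u) (vscale djk w)) v - djk * cross (vadd v w) v)
      by (coords; ring).
    rewrite <- Hclose, H; coords; ring.
Qed.

Lemma equal_projections n u v : sqn u = 1 -> sqn v = 1 ->
  cross n (vadd u v) = 0 -> dot n u < 0 -> dot n v < 0 -> dot n u = dot n v.
Proof.
  intros Hu Hv Hr Nu Nv.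
  pose proof (lagrange n u) as Lu; pose proof (lagrange n v) as Lv.
  assert (Cv : cross n v = - cross n u)
    by (replace (cross n v) with (cross n (vadd u v) - cross n u) by (coords; ring); lra).
  rewrite Hu in Lu; rewrite Hv, Cv in Lv.
  assert (E : (dot n u - dot n v) * (dot n u + dot n v) = 0) by lra.
  apply Rmult_integral in E; lra.
Qed.

Lemma reflection_cos n u v : sqn u = 1 -> sqn v = 1 ->
  cross n (vadd u v) = 0 -> dot n u = dot n v ->
  sqn n * dot u v = 2 * dot n u ^ 2 - sqn n.
Proof.
  intros Hu Hv Hr Huv.
  pose proof (dot_cross_expand u v n) as E; pose proof (lagrange u n) as L.
  assert (Cv : cross v n = - cross u n)
    by (replace (cross v n) with (- cross n (vadd u v) - cross u n) by (coords; ring); lra).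
  rewrite (dot_sym u n), (dot_sym v n), <- Huv, Cv in E.
  rewrite Hu, (dot_sym u n) in L.
  lra.
Qed.

Lemma affine_vanish r r0 P1 P2 P3 : cross (vsub P2 P1) (vsub P3 P1) <> 0 ->
  dot r P1 + r0 = 0 -> dot r P2 + r0 = 0 -> dot r P3 + r0 = 0 ->
  r = (0, 0) /\ r0 = 0.
Proof.
  intros Hc H1 H2 H3.
  destruct (Req_dec (sqn r) 0) as [Hr|Hr].
  - apply sqn_zero in Hr; subst r; split; auto.
    revert H1; coords; lra.
  - exfalso; apply Hc, (perp_perp _ _ r Hr).
    + replace (dot (vsub P2 P1) r) with ((dot r P2 + r0) - (dot r P1 + r0)) by (coords; ring).
      lra.
    + replace (dot (vsub P3 P1) r) with ((dot r P3 + r0) - (dot r P1 + r0)) by (coords; ring).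
      lra.
Qed.

(** ** The central conic ea x^2 + eb y^2 = 1 *)

Definition nrm (ea eb : R) (P : pt) : pt := (ea * fst P, eb * snd P).

Lemma nrm_sym ea eb P Q : dot (nrm ea eb P) Q = dot (nrm ea eb Q) P.
Proof. unfold nrm; coords; ring. Qed.

(** Gram inversion: let B be the form with weights al, be, and suppose
    B(Pi,Pj) = 1 for i <> j and B(Pi,Pi) = 1 + k Ni at non-collinear points.
    For an affine function h = h.X + h0, the combination sum li Pi with
    li Ni = h(Pi) then satisfies n_B(sum li Pi) = k h and sum li = -k h0
    (one row of G (sum r_i r_i^T / N_i) = k I, with G = diag(al, be, -1)). *)
Lemma dual_frame al be k P1 P2 P3 N1 N2 N3 l1 l2 l3 h h0 :
  cross (vsub P2 P1) (vsub P3 P1) <> 0 ->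
  dot (nrm al be P1) P1 = 1 + k * N1 -> dot (nrm al be P2) P2 = 1 + k * N2 ->
  dot (nrm al be P3) P3 = 1 + k * N3 ->
  dot (nrm al be P1) P2 = 1 -> dot (nrm al be P1) P3 = 1 -> dot (nrm al be P2) P3 = 1 ->
  l1 * N1 = dot h P1 + h0 -> l2 * N2 = dot h P2 + h0 -> l3 * N3 = dot h P3 + h0 ->
  nrm al be (vadd (vscale l1 P1) (vadd (vscale l2 P2) (vscale l3 P3))) = vscale k h /\
  l1 + l2 + l3 = - k * h0.
Proof.
  intros Hc D1 D2 D3 B12 B13 B23 L1 L2 L3.
  set (S := vadd (vscale l1 P1) (vadd (vscale l2 P2) (vscale l3 P3))).
  assert (Hrow : forall X, dot (vsub (nrm al be S) (vscale k h)) X + (- (l1 + l2 + l3) - k * h0)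
    = l1 * (dot (nrm al be P1) X - 1) + l2 * (dot (nrm al be P2) X - 1)
      + l3 * (dot (nrm al be P3) X - 1) - k * (dot h X + h0))
    by (intro X; unfold S, nrm; coords; ring).
  destruct (affine_vanish (vsub (nrm al be S) (vscale k h)) (- (l1 + l2 + l3) - k * h0)
              P1 P2 P3 Hc) as [E E0].
  - rewrite Hrow, D1, (nrm_sym al be P2 P1), (nrm_sym al be P3 P1), B12, B13, <- L1; ring.
  - rewrite Hrow, D2, B12, (nrm_sym al be P3 P2), B23, <- L2; ring.
  - rewrite Hrow, D3, B13, B23, <- L3; ring.
  - split; [|lra].
    rewrite <- (vadd_vsub (vscale k h) (nrm al be S)), E; pt_ring.
Qed.

Section CentralConic.

Variables ea eb : R.
Hypotheses (Hea : 0 < ea) (Heb : 0 < eb).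

Definition on_conic (P : pt) : Prop := dot (nrm ea eb P) P = 1.

Lemma conic_form_pos x : x <> (0, 0) -> 0 < dot (nrm ea eb x) x.
Proof.
  destruct x as [x y]; unfold nrm, dot; simpl; intro Hx.
  destruct (Req_dec x 0) as [->|Hx0]; [destruct (Req_dec y 0) as [->|Hy0]|].
  - congruence.
  - assert (0 < y * y) by nra; nra.
  - assert (0 < x * x) by nra; nra.
Qed.

Lemma normal_sqn_pos P : on_conic P -> 0 < sqn (nrm ea eb P).
Proof.
  intro HP; destruct (Req_dec (sqn (nrm ea eb P)) 0) as [H|H].
  - apply sqn_zero in H; unfold on_conic in HP; rewrite H in HP.
    revert HP; coords; lra.
  - pose proof (sqn_nonneg (nrm ea eb P)); lra.
Qed.

Lemma chord_identity P x : on_conic P -> on_conic (vadd P x) ->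
  2 * dot (nrm ea eb P) x = - dot (nrm ea eb x) x.
Proof.
  unfold on_conic; intros HP HQ.
  replace (dot (nrm ea eb (vadd P x)) (vadd P x))
    with (dot (nrm ea eb P) P + 2 * dot (nrm ea eb P) x + dot (nrm ea eb x) x) in HQ
    by (unfold nrm; coords; ring).
  lra.
Qed.

Lemma chord_neg P Q : on_conic P -> on_conic Q -> P <> Q ->
  dot (nrm ea eb P) (vsub Q P) < 0.
Proof.
  intros HP HQ Hne.
  rewrite <- (vadd_vsub P Q) in HQ.
  pose proof (chord_identity P _ HP HQ) as C.
  assert (0 < dot (nrm ea eb (vsub Q P)) (vsub Q P)).
  { apply conic_form_pos; intro E; apply Hne.
    rewrite <- (vadd_vsub P Q), E; pt_ring. }
  lra.
Qed.

Lemma chord_sym P Q : on_conic P -> on_conic Q ->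
  dot (nrm ea eb Q) (vsub P Q) = dot (nrm ea eb P) (vsub Q P).
Proof.
  intros HP HQ.
  pose proof (chord_identity P (vsub Q P) HP) as C1.
  pose proof (chord_identity Q (vsub P Q) HQ) as C2.
  rewrite vadd_vsub in C1, C2.
  specialize (C1 HQ); specialize (C2 HP).
  replace (dot (nrm ea eb (vsub P Q)) (vsub P Q))
    with (dot (nrm ea eb (vsub Q P)) (vsub Q P)) in C2 by (unfold nrm; coords; ring).
  lra.
Qed.

(** A line meets the conic in at most two points. *)
Lemma conic_noncollinear P1 P2 P3 : on_conic P1 -> on_conic P2 -> on_conic P3 ->
  P1 <> P2 -> P2 <> P3 -> P3 <> P1 -> cross (vsub P2 P1) (vsub P3 P1) <> 0.
Proof.
  intros H1 H2 H3 N12 N23 N31 Hc.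
  assert (Hv : vsub P2 P1 <> (0, 0)) by (intro E; apply N12; symmetry; apply vsub_eq0, E).
  assert (Hsv : sqn (vsub P2 P1) <> 0) by (intro E; apply Hv, sqn_zero, E).
  assert (Hpar : cross (vsub P3 P1) (vsub P2 P1) = 0)
    by (replace (cross (vsub P3 P1) (vsub P2 P1)) with (- cross (vsub P2 P1) (vsub P3 P1))
          by (coords; ring); lra).
  pose proof (parallel_decomp _ _ Hsv Hpar) as E3.
  revert E3; generalize (dot (vsub P3 P1) (vsub P2 P1) / sqn (vsub P2 P1)); intros t E3.
  pose proof (conic_form_pos _ Hv) as Q.
  (* P3 - P1 = t (P2 - P1), and the chord identity forces t (t - 1) = 0 *)
  rewrite <- (vadd_vsub P1 P2) in H2; rewrite <- (vadd_vsub P1 P3), E3 in H3.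
  pose proof (chord_identity _ _ H1 H2) as C2; pose proof (chord_identity _ _ H1 H3) as C3.
  replace (dot (nrm ea eb P1) (vscale t (vsub P2 P1)))
    with (t * dot (nrm ea eb P1) (vsub P2 P1)) in C3 by (unfold nrm; coords; ring).
  replace (dot (nrm ea eb (vscale t (vsub P2 P1))) (vscale t (vsub P2 P1)))
    with (t ^ 2 * dot (nrm ea eb (vsub P2 P1)) (vsub P2 P1)) in C3 by (unfold nrm; coords; ring).
  assert (T : t * (t - 1) * dot (nrm ea eb (vsub P2 P1)) (vsub P2 P1) = 0) by nra.
  apply Rmult_integral in T as [T|T]; [apply Rmult_integral in T as [T|T]|lra].
  - apply N31, vsub_eq0; rewrite E3, T; pt_ring.
  - apply N23; symmetry; apply vsub_eq0.
    replace (vsub P3 P2) with (vsub (vsub P3 P1) (vsub P2 P1)) by pt_ring.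
    rewrite E3; replace t with 1 by lra; pt_ring.
Qed.

Lemma no_common_tangent_point P1 P2 P3 Q : cross (vsub P2 P1) (vsub P3 P1) <> 0 ->
  dot (nrm ea eb P1) Q = 1 -> dot (nrm ea eb P2) Q = 1 -> dot (nrm ea eb P3) Q = 1 -> False.
Proof.
  intros Hc T1 T2 T3.
  rewrite nrm_sym in T1, T2, T3.
  destruct (affine_vanish (nrm ea eb Q) (-1) P1 P2 P3 Hc) as [_ H]; lra.
Qed.

Lemma normal_sqn_le P : ea <= eb -> on_conic P -> sqn (nrm ea eb P) <= eb.
Proof.
  destruct P as [x y]; unfold on_conic, nrm, sqn, dot; simpl; intros Hab HP.
  assert (ea * ea * x ^ 2 <= eb * ea * x ^ 2) by (apply Rmult_le_compat_r; nra).
  nra.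
Qed.

(** Offsetting Q by k n(Q) amounts to changing the weights to ea + k ea^2,
    eb + k eb^2. *)
Lemma offset_weights k X Y :
  dot (nrm (ea + k * ea ^ 2) (eb + k * eb ^ 2) X) Y
  = dot (nrm ea eb X) (vadd Y (vscale k (nrm ea eb Y))).
Proof. unfold nrm; coords; ring. Qed.

(** If each Pi + k n(Pi) lies on the tangents at the two other points, three
    rows of the inverted Gram system of the offset form give: the inverse
    squared normals sum to -k, and the second moments of the points weighted
    by 1/|n(Pi)|^2 are k/(ea + k ea^2) and k/(eb + k eb^2). *)
Lemma offset_weighted_sums k P1 P2 P3 :
  on_conic P1 -> on_conic P2 -> on_conic P3 -> cross (vsub P2 P1) (vsub P3 P1) <> 0 ->
  dot (nrm ea eb P1) (vadd P2 (vscale k (nrm ea eb P2))) = 1 ->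
  dot (nrm ea eb P1) (vadd P3 (vscale k (nrm ea eb P3))) = 1 ->
  dot (nrm ea eb P2) (vadd P3 (vscale k (nrm ea eb P3))) = 1 ->
  / sqn (nrm ea eb P1) + / sqn (nrm ea eb P2) + / sqn (nrm ea eb P3) = - k /\
  (ea + k * ea ^ 2) * (fst P1 ^ 2 / sqn (nrm ea eb P1) + fst P2 ^ 2 / sqn (nrm ea eb P2)
                       + fst P3 ^ 2 / sqn (nrm ea eb P3)) = k /\
  (eb + k * eb ^ 2) * (snd P1 ^ 2 / sqn (nrm ea eb P1) + snd P2 ^ 2 / sqn (nrm ea eb P2)
                       + snd P3 ^ 2 / sqn (nrm ea eb P3)) = k.
Proof.
  intros H1 H2 H3 Hc T12 T13 T23.
  rewrite <- offset_weights in T12, T13, T23.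
  assert (Hself : forall P, on_conic P ->
    dot (nrm (ea + k * ea ^ 2) (eb + k * eb ^ 2) P) P = 1 + k * sqn (nrm ea eb P)).
  { intros P HP; rewrite offset_weights; unfold on_conic in HP.
    rewrite <- HP; unfold nrm; coords; ring. }
  pose proof (normal_sqn_pos _ H1) as N1; pose proof (normal_sqn_pos _ H2) as N2;
    pose proof (normal_sqn_pos _ H3) as N3.
  (* dual of the affine functions 1, x and y *)
  destruct (dual_frame _ _ k P1 P2 P3 _ _ _
             (/ sqn (nrm ea eb P1)) (/ sqn (nrm ea eb P2)) (/ sqn (nrm ea eb P3)) (0, 0) 1
             Hc (Hself _ H1) (Hself _ H2) (Hself _ H3) T12 T13 T23) as [_ Hinv];
    try (unfold dot; simpl; field; lra).
  destruct (dual_frame _ _ k P1 P2 P3 _ _ _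
             (fst P1 / sqn (nrm ea eb P1)) (fst P2 / sqn (nrm ea eb P2))
             (fst P3 / sqn (nrm ea eb P3)) (1, 0) 0
             Hc (Hself _ H1) (Hself _ H2) (Hself _ H3) T12 T13 T23) as [Sx _];
    try (unfold dot; simpl; field; lra).
  destruct (dual_frame _ _ k P1 P2 P3 _ _ _
             (snd P1 / sqn (nrm ea eb P1)) (snd P2 / sqn (nrm ea eb P2))
             (snd P3 / sqn (nrm ea eb P3)) (0, 1) 0
             Hc (Hself _ H1) (Hself _ H2) (Hself _ H3) T12 T13 T23) as [Sy _];
    try (unfold dot; simpl; field; lra).
  apply (f_equal fst) in Sx; apply (f_equal snd) in Sy.
  set (n1 := sqn (nrm ea eb P1)) in *; set (n2 := sqn (nrm ea eb P2)) in *;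
    set (n3 := sqn (nrm ea eb P3)) in *.
  unfold nrm, vadd, vscale in Sx, Sy; simpl in Sx, Sy.
  split; [lra|split].
  - transitivity (k * 1); [rewrite <- Sx; unfold Rdiv; ring | ring].
  - transitivity (k * 1); [rewrite <- Sy; unfold Rdiv; ring | ring].
Qed.

(** Consequently sum 1/|n(Pi)|^2 = -k, and k satisfies a quadratic equation
    (use ea x^2 + eb y^2 = 1 to combine the two second moments). *)
Lemma offset_triangle_relations k P1 P2 P3 :
  on_conic P1 -> on_conic P2 -> on_conic P3 -> cross (vsub P2 P1) (vsub P3 P1) <> 0 -> k <> 0 ->
  dot (nrm ea eb P1) (vadd P2 (vscale k (nrm ea eb P2))) = 1 ->
  dot (nrm ea eb P1) (vadd P3 (vscale k (nrm ea eb P3))) = 1 ->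
  dot (nrm ea eb P2) (vadd P3 (vscale k (nrm ea eb P3))) = 1 ->
  / sqn (nrm ea eb P1) + / sqn (nrm ea eb P2) + / sqn (nrm ea eb P3) = - k /\
  k ^ 2 * ea * eb + 2 * k * (ea + eb) + 3 = 0.
Proof.
  intros H1 H2 H3 Hc Hk T12 T13 T23.
  destruct (offset_weighted_sums k P1 P2 P3 H1 H2 H3 Hc T12 T13 T23) as (Hinv & Sx & Sy).
  pose proof (normal_sqn_pos _ H1) as N1; pose proof (normal_sqn_pos _ H2) as N2;
    pose proof (normal_sqn_pos _ H3) as N3.
  split; [exact Hinv|].
  set (n1 := sqn (nrm ea eb P1)) in *; set (n2 := sqn (nrm ea eb P2)) in *;
    set (n3 := sqn (nrm ea eb P3)) in *.
  set (X := fst P1 ^ 2 / n1 + fst P2 ^ 2 / n2 + fst P3 ^ 2 / n3) in Sx.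
  set (Y := snd P1 ^ 2 / n1 + snd P2 ^ 2 / n2 + snd P3 ^ 2 / n3) in Sy.
  assert (Hsum : ea * X + eb * Y = / n1 + / n2 + / n3).
  { unfold on_conic, nrm, dot in H1, H2, H3; simpl in H1, H2, H3.
    replace (ea * X + eb * Y) with
      ((ea * fst P1 * fst P1 + eb * snd P1 * snd P1) / n1
       + (ea * fst P2 * fst P2 + eb * snd P2 * snd P2) / n2
       + (ea * fst P3 * fst P3 + eb * snd P3 * snd P3) / n3)
      by (unfold X, Y; field; repeat split; lra).
    rewrite H1, H2, H3; field; repeat split; lra. }
  assert (M : k * (k ^ 2 * ea * eb + 2 * k * (ea + eb) + 3) = 0).
  { assert (Z : (1 + k * ea) * (1 + k * eb) * (ea * X + eb * Y)
                 = (1 + k * eb) * ((ea + k * ea ^ 2) * X) + (1 + k * ea) * ((eb + k * eb ^ 2) * Y))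
      by ring.
    rewrite Hsum, Hinv, Sx, Sy in Z; lra. }
  apply Rmult_integral in M as [M|M]; [contradiction|exact M].
Qed.

(** Coordinates of a chord from P = (x, y) with unit direction (p, q) and
    length d whose far end, offset by k times its normal, lies on the tangent
    at P: eliminating d leaves k |n|^2 q(v) = 2 c (c + k n.(ea p, eb q)),
    where c = n.v is the normal projection of the chord. *)
Lemma chord_offset_relation x y p q d k :
  ea * x ^ 2 + eb * y ^ 2 = 1 -> 0 < d ->
  ea * (x + d * p) ^ 2 + eb * (y + d * q) ^ 2 = 1 ->
  ea * x * (x + d * p + k * (ea * (x + d * p))) + eb * y * (y + d * q + k * (eb * (y + d * q))) = 1 ->
  k * (ea ^ 2 * x ^ 2 + eb ^ 2 * y ^ 2) * (ea * p ^ 2 + eb * q ^ 2)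
  = 2 * (ea * x * p + eb * y * q) * ((ea * x * p + eb * y * q) + k * (ea ^ 2 * x * p + eb ^ 2 * y * q)).
Proof.
  intros HP Hd HQ HT.
  (* the far end is on the conic: 2 c + d q(v) = 0 *)
  assert (Hchord : d * (ea * p ^ 2 + eb * q ^ 2) = - 2 * (ea * x * p + eb * y * q)).
  { apply (Rmult_eq_reg_l d); [|lra].
    replace (d * (d * (ea * p ^ 2 + eb * q ^ 2)))
      with (ea * (x + d * p) ^ 2 + eb * (y + d * q) ^ 2 - (ea * x ^ 2 + eb * y ^ 2)
            - 2 * d * (ea * x * p + eb * y * q)) by ring.
    rewrite HQ, HP; ring. }
  (* the offset far end is on the tangent at P: k |n|^2 + d (c + k G) = 0 *)
  assert (Hoff : k * (ea ^ 2 * x ^ 2 + eb ^ 2 * y ^ 2)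
    = - d * ((ea * x * p + eb * y * q) + k * (ea ^ 2 * x * p + eb ^ 2 * y * q))).
  { replace (k * (ea ^ 2 * x ^ 2 + eb ^ 2 * y ^ 2))
      with (ea * x * (x + d * p + k * (ea * (x + d * p)))
            + eb * y * (y + d * q + k * (eb * (y + d * q))) - (ea * x ^ 2 + eb * y ^ 2)
            - d * ((ea * x * p + eb * y * q) + k * (ea ^ 2 * x * p + eb ^ 2 * y * q))) by ring.
    rewrite HT, HP; ring. }
  rewrite Hoff.
  replace (- d * ((ea * x * p + eb * y * q) + k * (ea ^ 2 * x * p + eb ^ 2 * y * q))
             * (ea * p ^ 2 + eb * q ^ 2))
    with (- (d * (ea * p ^ 2 + eb * q ^ 2))
            * ((ea * x * p + eb * y * q) + k * (ea ^ 2 * x * p + eb ^ 2 * y * q))) by ring.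
  rewrite Hchord; ring.
Qed.

(** Decomposing the unit direction v in the orthogonal frame (n, perp n) turns
    the previous relation into c^2 (k(ea+eb)+2) = k ea eb. *)
Lemma joachimsthal_square_core x y p q k :
  ea * x ^ 2 + eb * y ^ 2 = 1 -> p ^ 2 + q ^ 2 = 1 ->
  0 < ea ^ 2 * x ^ 2 + eb ^ 2 * y ^ 2 ->
  k * (ea ^ 2 * x ^ 2 + eb ^ 2 * y ^ 2) * (ea * p ^ 2 + eb * q ^ 2)
  = 2 * (ea * x * p + eb * y * q) * ((ea * x * p + eb * y * q) + k * (ea ^ 2 * x * p + eb ^ 2 * y * q)) ->
  (ea * x * p + eb * y * q) ^ 2 * (k * (ea + eb) + 2) = k * ea * eb.
Proof.
  intros HP Hv HN E.
  set (c := ea * x * p + eb * y * q) in *.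
  set (s := ea * x * q - eb * y * p).
  set (N := ea ^ 2 * x ^ 2 + eb ^ 2 * y ^ 2) in *.
  set (Qv := ea * p ^ 2 + eb * q ^ 2) in *.
  set (G := ea ^ 2 * x * p + eb ^ 2 * y * q) in *.
  set (K := ea ^ 3 * x ^ 2 + eb ^ 3 * y ^ 2).
  set (m := ea * eb * x * y * (eb - ea)).
  (* N v = c n + s perp n, so the form on v and its pairing with n expand as: *)
  assert (Ia : N ^ 2 * Qv = c ^ 2 * K + 2 * c * s * m + s ^ 2 * (ea * eb)).
  { replace (s ^ 2 * (ea * eb)) with (s ^ 2 * (ea * eb) * (ea * x ^ 2 + eb * y ^ 2))
      by (rewrite HP; ring).
    unfold N, Qv, c, s, K, m; ring. }
  assert (Ib : N * G = c * K + s * m) by (unfold N, G, c, s, K, m; ring).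
  assert (Dc : c ^ 2 + s ^ 2 = N).
  { replace N with (N * (p ^ 2 + q ^ 2)) by (rewrite Hv; ring).
    unfold c, s, N; ring. }
  assert (KE : K + ea * eb = N * (ea + eb)).
  { replace (ea * eb) with (ea * eb * (ea * x ^ 2 + eb * y ^ 2)) by (rewrite HP; ring).
    unfold K, N; ring. }
  assert (R : k * s ^ 2 * (ea * eb) - k * c ^ 2 * K - 2 * c ^ 2 * N = 0).
  { apply (Rmult_eq_reg_l N); [|lra].
    replace (N * (k * s ^ 2 * (ea * eb) - k * c ^ 2 * K - 2 * c ^ 2 * N))
      with (N ^ 2 * (k * N * Qv - 2 * c * (c + k * G))
            - k * N * (N ^ 2 * Qv - (c ^ 2 * K + 2 * c * s * m + s ^ 2 * (ea * eb)))
            + 2 * k * c * N * (N * G - (c * K + s * m))) by ring.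
    rewrite Ia, Ib, E; ring. }
  apply (Rmult_eq_reg_l N); [|lra].
  replace (N * (c ^ 2 * (k * (ea + eb) + 2)))
    with (c ^ 2 * (k * (K + ea * eb) + 2 * N)) by (rewrite KE; ring).
  replace (N * (k * ea * eb)) with (k * ea * eb * (c ^ 2 + s ^ 2)) by (rewrite Dc; ring).
  lra.
Qed.

End CentralConic.

(** ** Unit directions, distances and interior angles *)

Lemma distance_sym P Q : Defs.dist P Q = Defs.dist Q P.
Proof. unfold Defs.dist, norm; f_equal; coords; ring. Qed.

Lemma distance_pos P Q : P <> Q -> 0 < Defs.dist P Q.
Proof.
  intro H; apply sqrt_lt_R0, sqn_pos.
  intro E; apply H, vsub_eq0, E.
Qed.

Lemma udir_scale P Q : P <> Q -> vsub Q P = vscale (Defs.dist P Q) (udir P Q).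
Proof.
  intro H; pose proof (distance_pos P Q H) as Hd.
  unfold udir; rewrite (distance_sym Q P).
  revert Hd; generalize (Defs.dist P Q); intros d Hd.
  apply injective_projections; coords; field; lra.
Qed.

Lemma udir_unit P Q : P <> Q -> sqn (udir P Q) = 1.
Proof.
  intro H; pose proof (distance_pos P Q H) as Hd.
  assert (Hsq : Defs.dist P Q * Defs.dist P Q = sqn (vsub Q P)).
  { rewrite distance_sym; unfold Defs.dist, norm; apply sqrt_sqrt, sqn_nonneg. }
  unfold udir; rewrite (distance_sym Q P).
  replace (sqn (vscale (/ Defs.dist P Q) (vsub Q P)))
    with (sqn (vsub Q P) / (Defs.dist P Q * Defs.dist P Q)) by (coords; field; lra).
  rewrite Hsq; field.
  rewrite <- Hsq; apply Rmult_integral_contrapositive_currified; lra.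
Qed.

Lemma udir_rev P Q : udir Q P = vscale (-1) (udir P Q).
Proof.
  unfold udir; rewrite (distance_sym P Q).
  generalize (Defs.dist Q P); intro d; pt_ring.
Qed.

Lemma dot_udir z P Q : P <> Q -> dot z (udir P Q) = dot z (vsub Q P) / Defs.dist P Q.
Proof.
  intro H; pose proof (distance_pos P Q H) as Hd.
  rewrite (udir_scale P Q H).
  revert Hd; generalize (Defs.dist P Q), (udir P Q); intros d u Hd.
  coords; field; lra.
Qed.

Lemma cos_twice_interior_angle A B C : B <> A -> C <> A ->
  cos (2 * interior_angle A B C)
  = 2 * dot (vsub B A) (vsub C A) ^ 2 / (sqn (vsub B A) * sqn (vsub C A)) - 1.
Proof.
  intros HB HC.
  assert (PB : 0 < sqn (vsub B A)) by (apply sqn_pos; intro E; apply HB, vsub_eq0, E).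
  assert (PC : 0 < sqn (vsub C A)) by (apply sqn_pos; intro E; apply HC, vsub_eq0, E).
  pose proof (lagrange (vsub B A) (vsub C A)) as L.
  unfold interior_angle, norm; fold (sqn (vsub B A)) (sqn (vsub C A)).
  revert PB PC L; generalize (dot (vsub B A) (vsub C A)), (sqn (vsub B A)), (sqn (vsub C A)),
    (cross (vsub B A) (vsub C A)); intros t x y s PB PC L.
  pose proof (sqrt_lt_R0 x PB) as Rx; pose proof (sqrt_lt_R0 y PC) as Ry.
  pose proof (sqrt_sqrt x (Rlt_le _ _ PB)) as Sx; pose proof (sqrt_sqrt y (Rlt_le _ _ PC)) as Sy.
  assert (Hsq : (t / (sqrt x * sqrt y)) ^ 2 = t ^ 2 / (x * y)).
  { rewrite <- Sx at 2; rewrite <- Sy at 2; field; lra. }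
  (* Cauchy-Schwarz: the argument of acos lies in [-1, 1] *)
  assert (Hle : (t / (sqrt x * sqrt y)) ^ 2 <= 1).
  { rewrite Hsq; apply (Rmult_le_reg_r (x * y)); [nra|]. field_simplify; nra. }
  rewrite cos_2a_cos, cos_acos by nra.
  replace (2 * t ^ 2 / (x * y)) with (2 * (t ^ 2 / (x * y))) by (field; lra).
  rewrite <- Hsq; ring.
Qed.

(** ** Billiard triangles inscribed in the conic *)

Section Billiard.

Variables ea eb : R.
Hypotheses (Hea : 0 < ea) (Heb : 0 < eb).

(** The normal at P bisects the angle between the sides P->Pm and P->Pp. *)
Definition reflects (Pm P Pp : pt) : Prop :=
  cross (nrm ea eb P) (vadd (udir P Pm) (udir P Pp)) = 0.

Definition billiard_triangle (P1 P2 P3 : pt) : Prop :=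
  on_conic ea eb P1 /\ on_conic ea eb P2 /\ on_conic ea eb P3 /\
  P1 <> P2 /\ P2 <> P3 /\ P3 <> P1 /\
  reflects P3 P1 P2 /\ reflects P1 P2 P3 /\ reflects P2 P3 P1.

Definition tangent_at (P Q : pt) : Prop := dot (nrm ea eb P) Q = 1.

Definition outer_triangle (P1 P2 P3 Q1 Q2 Q3 : pt) : Prop :=
  tangent_at P2 Q1 /\ tangent_at P3 Q1 /\ tangent_at P3 Q2 /\
  tangent_at P1 Q2 /\ tangent_at P1 Q3 /\ tangent_at P2 Q3.

Lemma billiard_rotate P1 P2 P3 : billiard_triangle P1 P2 P3 -> billiard_triangle P2 P3 P1.
Proof. unfold billiard_triangle; tauto. Qed.

Lemma outer_rotate P1 P2 P3 Q1 Q2 Q3 :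
  outer_triangle P1 P2 P3 Q1 Q2 Q3 -> outer_triangle P2 P3 P1 Q2 Q3 Q1.
Proof. unfold outer_triangle; tauto. Qed.

Lemma udir_normal_neg P Q : on_conic ea eb P -> on_conic ea eb Q -> P <> Q ->
  dot (nrm ea eb P) (udir P Q) < 0.
Proof.
  intros HP HQ Hne; rewrite dot_udir by exact Hne.
  pose proof (chord_neg ea eb Hea Heb P Q HP HQ Hne); pose proof (distance_pos P Q Hne).
  apply Rdiv_neg_pos; assumption.
Qed.

Lemma tangent_orth P X z : on_conic ea eb P ->
  dot (nrm ea eb P) X = 0 -> cross (nrm ea eb P) z = 0 -> dot X z = 0.
Proof.
  intros HP HX Hz; rewrite dot_sym.
  apply (par_perp _ _ (nrm ea eb P)).
  - pose proof (normal_sqn_pos ea eb P HP); lra.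
  - replace (cross z (nrm ea eb P)) with (- cross (nrm ea eb P) z) by (coords; ring); lra.
  - rewrite dot_sym; exact HX.
Qed.

Lemma joachimsthal_square k P Q : on_conic ea eb P -> on_conic ea eb Q -> P <> Q ->
  dot (nrm ea eb P) (vadd Q (vscale k (nrm ea eb Q))) = 1 ->
  dot (nrm ea eb P) (udir P Q) ^ 2 * (k * (ea + eb) + 2) = k * ea * eb.
Proof.
  intros HP HQ Hne T.
  pose proof (udir_unit P Q Hne) as Hv; pose proof (distance_pos P Q Hne) as Hd.
  pose proof (normal_sqn_pos ea eb P HP) as HN.
  assert (EQ : Q = vadd P (vscale (Defs.dist P Q) (udir P Q)))
    by (rewrite <- udir_scale by exact Hne; symmetry; apply vadd_vsub).
  rewrite EQ in HQ, T; clear EQ.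
  revert HQ T Hv Hd; generalize (Defs.dist P Q), (udir P Q); intros d [p q] HQ T Hv Hd.
  destruct P as [x y]; unfold on_conic, nrm in *; coords.
  assert (HP2 : ea * x ^ 2 + eb * y ^ 2 = 1) by (rewrite <- HP; ring).
  apply (joachimsthal_square_core ea eb x y p q k HP2); [rewrite <- Hv; ring | nra |].
  apply (chord_offset_relation ea eb x y p q d k HP2 Hd); [rewrite <- HQ | rewrite <- T]; ring.
Qed.

Section Vertex.

Variables P1 P2 P3 : pt.
Hypothesis BT : billiard_triangle P1 P2 P3.

Local Notation n1 := (nrm ea eb P1).
Local Notation u := (udir P1 P2).
Local Notation v := (udir P1 P3).
Local Notation w := (udir P2 P3).

Lemma vertex_projection : dot n1 u = dot n1 v /\ dot n1 u < 0.
Proof.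
  destruct BT as (H1 & H2 & H3 & N12 & N23 & N31 & R1 & _).
  assert (N13 : P1 <> P3) by congruence.
  split; [|apply udir_normal_neg; auto].
  apply equal_projections; try apply udir_unit; auto; try apply udir_normal_neg; auto.
  unfold reflects in R1; rewrite vadd_comm; exact R1.
Qed.

Lemma vertex_units : sqn u = 1 /\ sqn v = 1 /\ sqn w = 1.
Proof.
  destruct BT as (_ & _ & _ & N12 & N23 & N31 & _).
  repeat split; apply udir_unit; congruence.
Qed.

Lemma vertex_closure :
  vscale (Defs.dist P1 P3) v = vadd (vscale (Defs.dist P1 P2) u) (vscale (Defs.dist P2 P3) w).
Proof.
  destruct BT as (_ & _ & _ & N12 & N23 & N31 & _).
  rewrite <- !udir_scale by congruence; pt_ring.
Qed.

Lemma vertex_sides_independent : cross u v <> 0.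
Proof.
  destruct BT as (H1 & H2 & H3 & N12 & N23 & N31 & _).
  intro Huv; apply (conic_noncollinear ea eb Hea Heb P1 P2 P3); auto.
  rewrite !udir_scale by congruence.
  replace (cross (vscale (Defs.dist P1 P2) u) (vscale (Defs.dist P1 P3) v))
    with (Defs.dist P1 P2 * Defs.dist P1 P3 * cross u v) by (coords; ring).
  rewrite Huv; ring.
Qed.

Lemma vertex_bisectors_nonzero :
  sqn (vadd u v) <> 0 /\ sqn (vsub w u) <> 0 /\ sqn (vadd v w) <> 0.
Proof.
  destruct BT as (_ & _ & _ & N12 & N23 & N31 & _).
  apply (triangle_bisectors_nonzero _ _ _ (Defs.dist P1 P2) (Defs.dist P1 P3) (Defs.dist P2 P3));
    try apply distance_pos; try congruence.
  - apply vertex_sides_independent.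
  - apply vertex_closure.
Qed.

Lemma vertex_reflections : cross n1 (vadd u v) = 0 /\
  cross (nrm ea eb P2) (vsub w u) = 0 /\ cross (nrm ea eb P3) (vadd v w) = 0.
Proof.
  destruct BT as (_ & _ & _ & _ & _ & _ & R1 & R2 & R3).
  unfold reflects in R1, R2, R3.
  rewrite (udir_rev P1 P2) in R2; rewrite (udir_rev P1 P3), (udir_rev P2 P3) in R3.
  repeat split.
  - rewrite vadd_comm; exact R1.
  - rewrite <- R2; coords; ring.
  - replace (cross (nrm ea eb P3) (vadd v w))
      with (- cross (nrm ea eb P3) (vadd (vscale (-1) w) (vscale (-1) v))) by (coords; ring).
    rewrite R3; ring.
Qed.

(** The outer vertex opposite P1 is the excenter: it lies on the normal at P1,
    at offset kap with perimeter 2 kap c. *)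
Lemma vertex_excenter Q : tangent_at P2 Q -> tangent_at P3 Q ->
  exists kap, vsub Q P1 = vscale kap n1 /\ perimeter P1 P2 P3 = 2 * kap * dot n1 u.
Proof.
  intros T2 T3.
  destruct vertex_units as (Hu & Hv & Hw).
  destruct vertex_bisectors_nonzero as (Zuv & Zwu & Zvw).
  destruct vertex_reflections as (R1 & R2 & R3).
  destruct vertex_projection as (Juv & _).
  destruct BT as (H1 & H2 & H3 & N12 & N23 & N31 & _).
  unfold tangent_at, on_conic in *.
  (* Q lies on the external bisectors of the orbit at P2 and P3 *)
  assert (E2 : dot (vsub (vsub Q P1) (vscale (Defs.dist P1 P2) u)) (vsub w u) = 0).
  { rewrite <- udir_scale by congruence.
    replace (vsub (vsub Q P1) (vsub P2 P1)) with (vsub Q P2) by pt_ring.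
    apply (tangent_orth P2); auto; rewrite dot_vsub_r; lra. }
  assert (E3 : dot (vsub (vsub Q P1) (vscale (Defs.dist P1 P3) v)) (vadd v w) = 0).
  { rewrite <- udir_scale by congruence.
    replace (vsub (vsub Q P1) (vsub P3 P1)) with (vsub Q P3) by pt_ring.
    apply (tangent_orth P3); auto; rewrite dot_vsub_r; lra. }
  destruct (excenter_projection u v w (vsub Q P1) _ _ _ Hu Hv Hw Zwu Zvw vertex_closure E2 E3)
    as [Cross Proj].
  (* hence it lies on the internal bisector at P1, i.e. on the normal line *)
  assert (HN : sqn n1 <> 0) by (pose proof (normal_sqn_pos ea eb P1 H1); lra).
  pose proof (parallel_decomp n1 (vsub Q P1) HN (par_par _ _ _ Zuv Cross R1)) as EW.
  exists (dot (vsub Q P1) n1 / sqn n1); split; [exact EW|].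
  unfold perimeter; rewrite (distance_sym P3 P1).
  rewrite EW in Proj.
  replace (dot (vscale (dot (vsub Q P1) n1 / sqn n1) n1) (vadd u v))
    with (dot (vsub Q P1) n1 / sqn n1 * (dot n1 u + dot n1 v)) in Proj by (coords; ring).
  rewrite <- Juv in Proj; lra.
Qed.

(** cos (2 th1') = - cos th1 = 1 - 2 c^2 / |n(P1)|^2. *)
Lemma vertex_outer_angle Q1 Q2 Q3 : outer_triangle P1 P2 P3 Q1 Q2 Q3 ->
  cos (2 * interior_angle Q1 Q2 Q3) = 1 - 2 * dot n1 u ^ 2 / sqn n1.
Proof.
  intros (T21 & T31 & T32 & T12 & T13 & T23).
  destruct vertex_units as (Hu & Hv & Hw).
  destruct vertex_bisectors_nonzero as (_ & Zwu & Zvw).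
  destruct vertex_reflections as (R1 & R2 & R3).
  destruct vertex_projection as (Juv & _).
  destruct BT as (H1 & H2 & H3 & N12 & N23 & N31 & _).
  pose proof (conic_noncollinear ea eb Hea Heb P1 P2 P3 H1 H2 H3 N12 N23 N31) as Hc.
  (* the outer vertices are distinct: no point lies on three tangents *)
  assert (Q21 : Q2 <> Q1).
  { intro E; subst Q2; exact (no_common_tangent_point ea eb P1 P2 P3 Q1 Hc T12 T21 T31). }
  assert (Q31 : Q3 <> Q1).
  { intro E; subst Q3; exact (no_common_tangent_point ea eb P1 P2 P3 Q1 Hc T13 T21 T31). }
  unfold tangent_at in *.
  (* the sides of the outer triangle at Q1 are orthogonal to the bisectors at P3 and P2 *)
  assert (HX : dot (vsub Q2 Q1) (vadd v w) = 0)
    by (apply (tangent_orth P3); auto; rewrite dot_vsub_r; lra).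
  assert (HY : dot (vsub Q3 Q1) (vsub w u) = 0)
    by (apply (tangent_orth P2); auto; rewrite dot_vsub_r; lra).
  pose proof (excentral_angle u v w _ _ Hu Hv Hw Zwu Zvw HY HX) as A.
  pose proof (reflection_cos n1 u v Hu Hv R1 Juv) as C.
  assert (PX : 0 < sqn (vsub Q2 Q1)) by (apply sqn_pos; intro E; apply Q21, vsub_eq0, E).
  assert (PY : 0 < sqn (vsub Q3 Q1)) by (apply sqn_pos; intro E; apply Q31, vsub_eq0, E).
  pose proof (normal_sqn_pos ea eb P1 H1) as PN.
  rewrite cos_twice_interior_angle by assumption.
  rewrite (dot_sym (vsub Q2 Q1)).
  replace (2 * dot (vsub Q3 Q1) (vsub Q2 Q1) ^ 2 / (sqn (vsub Q2 Q1) * sqn (vsub Q3 Q1)))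
    with (1 - dot u v) by (rewrite A; field; lra).
  assert (Cuv : dot u v = 2 * dot n1 u ^ 2 / sqn n1 - 1)
    by (apply (Rmult_eq_reg_l (sqn n1)); [rewrite C; field|]; lra).
  lra.
Qed.

End Vertex.

Lemma joachimsthal_invariant P1 P2 P3 : billiard_triangle P1 P2 P3 ->
  dot (nrm ea eb P2) (udir P2 P3) = dot (nrm ea eb P1) (udir P1 P2).
Proof.
  intro BT; destruct (vertex_projection _ _ _ (billiard_rotate _ _ _ BT)) as [E _].
  destruct BT as (H1 & H2 & _ & N12 & _).
  rewrite E, !dot_udir by congruence.
  rewrite (chord_sym ea eb P1 P2 H1 H2), distance_sym; reflexivity.
Qed.

Lemma perimeter_rotate P1 P2 P3 : perimeter P2 P3 P1 = perimeter P1 P2 P3.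
Proof. unfold perimeter; ring. Qed.

Lemma outer_offsets P1 P2 P3 Q1 Q2 Q3 :
  billiard_triangle P1 P2 P3 -> outer_triangle P1 P2 P3 Q1 Q2 Q3 ->
  exists k, k <> 0 /\
    Q1 = vadd P1 (vscale k (nrm ea eb P1)) /\ Q2 = vadd P2 (vscale k (nrm ea eb P2)) /\
    Q3 = vadd P3 (vscale k (nrm ea eb P3)) /\
    perimeter P1 P2 P3 = 2 * k * dot (nrm ea eb P1) (udir P1 P2).
Proof.
  intros BT OT.
  pose proof (billiard_rotate _ _ _ BT) as BT2; pose proof (billiard_rotate _ _ _ BT2) as BT3.
  destruct OT as (T21 & T31 & T32 & T12 & T13 & T23).
  destruct (vertex_excenter P1 P2 P3 BT Q1 T21 T31) as (k1 & E1 & L1).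
  destruct (vertex_excenter P2 P3 P1 BT2 Q2 T32 T12) as (k2 & E2 & L2).
  destruct (vertex_excenter P3 P1 P2 BT3 Q3 T13 T23) as (k3 & E3 & L3).
  rewrite perimeter_rotate, (joachimsthal_invariant _ _ _ BT) in L2.
  rewrite (perimeter_rotate P2 P3 P1), perimeter_rotate, (joachimsthal_invariant _ _ _ BT2),
    (joachimsthal_invariant _ _ _ BT) in L3.
  destruct (vertex_projection _ _ _ BT) as [_ Hc].
  (* the three offsets agree, since the perimeter and the Joachimsthal constant do *)
  assert (K2 : k2 = k1) by (apply (Rmult_eq_reg_r (dot (nrm ea eb P1) (udir P1 P2))); lra).
  assert (K3 : k3 = k1) by (apply (Rmult_eq_reg_r (dot (nrm ea eb P1) (udir P1 P2))); lra).
  subst k2 k3.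
  destruct BT as (_ & _ & _ & N12 & N23 & N31 & _).
  assert (Hper : 0 < perimeter P1 P2 P3)
    by (unfold perimeter; pose proof (distance_pos P1 P2 N12);
        pose proof (distance_pos P2 P3 N23); pose proof (distance_pos P3 P1 N31); lra).
  exists k1; repeat split; auto.
  - intro K; rewrite K in L1; lra.
  - rewrite <- E1; symmetry; apply vadd_vsub.
  - rewrite <- E2; symmetry; apply vadd_vsub.
  - rewrite <- E3; symmetry; apply vadd_vsub.
Qed.

Theorem billiard_outer_triangle P1 P2 P3 Q1 Q2 Q3 : ea <= eb ->
  billiard_triangle P1 P2 P3 -> outer_triangle P1 P2 P3 Q1 Q2 Q3 ->
  let c := dot (nrm ea eb P1) (udir P1 P2) in
  exists k,
    perimeter P1 P2 P3 = 2 * k * c /\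
    cos (2 * interior_angle Q1 Q2 Q3) + cos (2 * interior_angle Q2 Q3 Q1)
      + cos (2 * interior_angle Q3 Q1 Q2) = 3 + 2 * k * c ^ 2 /\
    k ^ 2 * ea * eb + 2 * k * (ea + eb) + 3 = 0 /\
    c ^ 2 * (k * (ea + eb) + 2) = k * ea * eb /\
    3 / eb <= - k.
Proof.
  intros Hab BT OT c.
  pose proof (billiard_rotate _ _ _ BT) as BT2; pose proof (billiard_rotate _ _ _ BT2) as BT3.
  pose proof (outer_rotate _ _ _ _ _ _ OT) as OT2; pose proof (outer_rotate _ _ _ _ _ _ OT2) as OT3.
  destruct (outer_offsets _ _ _ _ _ _ BT OT) as (k & Hk & _ & E2 & E3 & HL).
  rewrite (vertex_outer_angle _ _ _ BT _ _ _ OT), (vertex_outer_angle _ _ _ BT2 _ _ _ OT2),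
    (vertex_outer_angle _ _ _ BT3 _ _ _ OT3), (joachimsthal_invariant _ _ _ BT2),
    (joachimsthal_invariant _ _ _ BT); fold c.
  destruct OT as (_ & _ & _ & T12 & T13 & T23).
  unfold tangent_at in T12, T13, T23; rewrite E2 in T12; rewrite E3 in T13, T23.
  pose proof BT as (H1 & H2 & H3 & N12 & N23 & N31 & _).
  destruct (offset_triangle_relations ea eb k P1 P2 P3 H1 H2 H3
              (conic_noncollinear ea eb Hea Heb P1 P2 P3 H1 H2 H3 N12 N23 N31) Hk T12 T13 T23)
    as [Hsum Hquad].
  pose proof (normal_sqn_pos ea eb P1 H1); pose proof (normal_sqn_pos ea eb P2 H2);
    pose proof (normal_sqn_pos ea eb P3 H3).
  exists k; repeat split; auto.
  - replace (1 - 2 * c ^ 2 / sqn (nrm ea eb P1) + (1 - 2 * c ^ 2 / sqn (nrm ea eb P2))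
             + (1 - 2 * c ^ 2 / sqn (nrm ea eb P3)))
      with (3 - 2 * c ^ 2 * (/ sqn (nrm ea eb P1) + / sqn (nrm ea eb P2)
                              + / sqn (nrm ea eb P3))) by (field; lra).
    rewrite Hsum; ring.
  - apply (joachimsthal_square k P1 P2 H1 H2 N12 T12).
  - (* each normal has squared length at most eb *)
    assert (Hinv : forall P, on_conic ea eb P -> / eb <= / sqn (nrm ea eb P)).
    { intros P HP; apply Rinv_le_contravar; [apply normal_sqn_pos, HP|].
      apply normal_sqn_le; auto. }
    pose proof (Hinv P1 H1); pose proof (Hinv P2 H2); pose proof (Hinv P3 H3).
    unfold Rdiv; lra.
Qed.

End Billiard.

(** ** Back to the ellipse x^2/a^2 + y^2/b^2 = 1 *)

(** The quadratic k^2 + 2k(A+B) + 3AB = 0 has roots -(A+B) +- d with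
    d = sqrt(A^2 - AB + B^2); the bound -k >= 3B selects the smaller one. *)
Lemma quadratic_root_selection A B k d : 0 < B -> B < A ->
  k ^ 2 + 2 * k * (A + B) + 3 * A * B = 0 -> 3 * B <= - k ->
  0 <= d -> d ^ 2 = A ^ 2 - A * B + B ^ 2 -> k + A + B + d = 0.
Proof.
  intros HB HAB Q Hbound Hd Hd2.
  assert (F : (k + A + B - d) * (k + A + B + d) = 0).
  { replace ((k + A + B - d) * (k + A + B + d))
      with ((k ^ 2 + 2 * k * (A + B) + 3 * A * B) + (A ^ 2 - A * B + B ^ 2) - d ^ 2) by ring.
    rewrite Q, Hd2; ring. }
  apply Rmult_integral in F as [F|F]; [|exact F].
  (* the larger root would force d <= A - 2B, but d^2 - (A-2B)^2 = 3B(A-B) > 0 *)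
  exfalso; assert (d <= A - 2 * B) by lra.
  assert (d ^ 2 <= (A - 2 * B) ^ 2) by nra.
  nra.
Qed.

Lemma closed_form A B k c2 cc d : 0 < B -> B < A ->
  k ^ 2 * / A * / B + 2 * k * (/ A + / B) + 3 = 0 ->
  c2 * (k * (/ A + / B) + 2) = k * / A * / B ->
  3 * B <= - k -> cc ^ 2 = A - B -> 0 <= d -> d ^ 2 = A ^ 2 - A * B + B ^ 2 ->
  3 + 2 * k * c2 = (A + B) * (A + B - 2 * d) / cc ^ 4.
Proof.
  intros HB HAB Hquad Hsq Hbound Hcc Hd Hd2.
  assert (Q : k ^ 2 + 2 * k * (A + B) + 3 * A * B = 0).
  { replace (k ^ 2 + 2 * k * (A + B) + 3 * A * B)
      with (A * B * (k ^ 2 * / A * / B + 2 * k * (/ A + / B) + 3)) by (field; lra).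
    rewrite Hquad; ring. }
  assert (C : c2 * (k * (A + B) + 2 * A * B) = k).
  { replace (c2 * (k * (A + B) + 2 * A * B))
      with (A * B * (c2 * (k * (/ A + / B) + 2))) by (field; lra).
    rewrite Hsq; field; lra. }
  pose proof (quadratic_root_selection A B k d HB HAB Q Hbound Hd Hd2) as Hroot.
  set (den := k * (A + B) + 2 * A * B) in C.
  assert (Hden : den <> 0) by (intro H0; rewrite H0 in C; lra).
  assert (Hc2 : c2 = k / den) by (rewrite <- C; field; exact Hden).
  assert (P : (3 * den + 2 * k ^ 2) * (A - B) ^ 2 = (A + B) * (A + B - 2 * d) * den).
  { replace d with (- (k + A + B)) by lra; unfold den.
    apply Rminus_diag_uniq.
    replace ((3 * (k * (A + B) + 2 * A * B) + 2 * k ^ 2) * (A - B) ^ 2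
             - (A + B) * (A + B - 2 * - (k + A + B)) * (k * (A + B) + 2 * A * B))
      with (- 8 * A * B * (k ^ 2 + 2 * k * (A + B) + 3 * A * B)) by ring.
    rewrite Q; ring. }
  replace (cc ^ 4) with ((A - B) ^ 2) by (rewrite <- Hcc; ring).
  apply (Rmult_eq_reg_r ((A - B) ^ 2 * den));
    [|apply Rmult_integral_contrapositive_currified; [apply pow_nonzero; lra | exact Hden]].
  replace ((3 + 2 * k * c2) * ((A - B) ^ 2 * den)) with ((3 * den + 2 * k ^ 2) * (A - B) ^ 2)
    by (rewrite Hc2; field; exact Hden).
  rewrite P; field; lra.
Qed.

Lemma three_periodic_billiard a b P1 P2 P3 : three_periodic a b P1 P2 P3 ->
  billiard_triangle (/ a ^ 2) (/ b ^ 2) P1 P2 P3.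
Proof.
  assert (Hconic : forall P, on_ellipse a b P -> on_conic (/ a ^ 2) (/ b ^ 2) P)
    by (intros P HP; unfold on_conic, nrm; rewrite <- HP; unfold ell_f, Rdiv; coords; ring).
  assert (Hrefl : forall Pm P Pp, billiard_reflection a b Pm P Pp ->
                    reflects (/ a ^ 2) (/ b ^ 2) Pm P Pp)
    by (intros Pm P Pp HR; unfold reflects, nrm; rewrite <- HR; unfold ell_tangent, Rdiv; coords; ring).
  unfold three_periodic, billiard_triangle; intuition.
Qed.

Lemma outer_triangle_of_tangent_lines a b P1 P2 P3 Q1 Q2 Q3 :
  on_tangent_line a b P2 Q1 -> on_tangent_line a b P3 Q1 -> on_tangent_line a b P3 Q2 ->
  on_tangent_line a b P1 Q2 -> on_tangent_line a b P1 Q3 -> on_tangent_line a b P2 Q3 ->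
  outer_triangle (/ a ^ 2) (/ b ^ 2) P1 P2 P3 Q1 Q2 Q3.
Proof.
  assert (Ht : forall P Q, on_tangent_line a b P Q -> tangent_at (/ a ^ 2) (/ b ^ 2) P Q)
    by (intros P Q H; unfold tangent_at, nrm; rewrite <- H;
        unfold on_tangent_line, Rdiv; coords; ring).
  unfold outer_triangle; intuition.
Qed.

Lemma joachimsthal_normal a b P1 P2 P3 : 0 < b -> b < a -> three_periodic a b P1 P2 P3 ->
  joachimsthal a b P1 P2 P3 = - dot (nrm (/ a ^ 2) (/ b ^ 2) P1) (udir P1 P2).
Proof.
  intros Hb Hab HP.
  assert (Hea : 0 < / a ^ 2) by (apply Rinv_0_lt_compat; nra).
  assert (Heb : 0 < / b ^ 2) by (apply Rinv_0_lt_compat; nra).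
  destruct (vertex_projection _ _ Hea Heb _ _ _ (three_periodic_billiard _ _ _ _ _ HP)) as [E _].
  unfold joachimsthal; rewrite E, (udir_rev P1 P3).
  generalize (udir P1 P3); intro v.
  unfold ell_grad, nrm, Rdiv; coords; field; split; lra.
Qed.

Theorem mainTheorem10 :
  forall (a b : R) (P1 P2 P3 Q1 Q2 Q3 : pt),
    0 < b -> b < a ->
    three_periodic a b P1 P2 P3 ->
    on_tangent_line a b P2 Q1 -> on_tangent_line a b P3 Q1 ->
    on_tangent_line a b P3 Q2 -> on_tangent_line a b P1 Q2 ->
    on_tangent_line a b P1 Q3 -> on_tangent_line a b P2 Q3 ->
    let c := sqrt (a ^ 2 - b ^ 2) in
    let delta := sqrt (a ^ 4 - a ^ 2 * b ^ 2 + b ^ 4) in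
    let J := joachimsthal a b P1 P2 P3 in
    let L := perimeter P1 P2 P3 in
    let S := cos (2 * interior_angle Q1 Q2 Q3)
           + cos (2 * interior_angle Q2 Q3 Q1)
           + cos (2 * interior_angle Q3 Q1 Q2) in
    S = (a ^ 2 + b ^ 2) * (a ^ 2 + b ^ 2 - 2 * delta) / c ^ 4 /\
    S = 3 - J * L.
Proof.
  intros a b P1 P2 P3 Q1 Q2 Q3 Hb Hab HP T21 T31 T32 T12 T13 T23 c delta J L S.
  assert (Hea : 0 < / a ^ 2) by (apply Rinv_0_lt_compat; nra).
  assert (Heb : 0 < / b ^ 2) by (apply Rinv_0_lt_compat; nra).
  assert (Hweights : / a ^ 2 <= / b ^ 2) by (apply Rinv_le_contravar; nra).
  destruct (billiard_outer_triangle _ _ Hea Heb P1 P2 P3 Q1 Q2 Q3 Hweights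
              (three_periodic_billiard _ _ _ _ _ HP)
              (outer_triangle_of_tangent_lines _ _ _ _ _ _ _ _ T21 T31 T32 T12 T13 T23))
    as (k & HL & HS & Hquad & Hsq & Hbound).
  fold S in HS; split; rewrite HS.
  - unfold Rdiv in Hbound; rewrite Rinv_inv in Hbound.
    apply closed_form; try nra.
    + unfold c; apply pow2_sqrt; nra.
    + apply sqrt_pos.
    + unfold delta; rewrite pow2_sqrt by nra; ring.
  - unfold J, L; rewrite HL, (joachimsthal_normal a b P1 P2 P3 Hb Hab HP); ring.
Qed.
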